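(* Let $n\ge 2$ and $1\le k\le n-1$ be integers, and let $z_1,\dots,z_n$ be indeterminates. Then \[ \Big(\prod_{i=0}^{k-1} i!\Big)^2\, n^{k-1}\,\Delta_{k+1}(H(n)) \;=\; \Delta_k(E(n)). \]
   Context: For $k\ge 0$ let $p_k=\sum_{i=1}^n z_i^k$ be the power sums. The Hermite matrix $H(n)$ is the matrix with entries $H(n)_{i,j}=p_{i+j-2}$ ($i,j\ge 1$). For an (infinite or finite) matrix $F$, $\Delta_k(F)$ denotes the determinant of its upper-left $k\times k$ submatrix. For distinct $i,j\in\{1,\dots,n\}$ and an integer $m\ge 0$, let $e^{(i,j)}_m$ be the elementary symmetric polynomial of degree $m$ in the $n-2$ variables $\{z_l: l\ne i,j\}$ (with $e^{(i,j)}_0=1$ and $e^{(i,j)}_m=0$ if $m>n-2$). $E(n)$ is the infinite matrix with entries, for $r,s\ge 1$, \[ E(n)_{r,s}=(r-1)!\,(s-1)!\sum_{1\le i<j\le n} e^{(i,j)}_{r-1}\,e^{(i,j)}_{s-1}\,(z_i-z_j)^2 . \] *)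

From HB Require Import structures.
From mathcomp Require Import all_boot all_order all_algebra.
Set Implicit Arguments. Unset Strict Implicit. Unset Printing Implicit Defensive.
Import Order.TTheory GRing.Theory.
Local Open Scope ring_scope.

Definition psum (R : comRingType) (n : nat) (z : 'I_n -> R) (k : nat) : R :=
  \sum_(i < n) z i ^+ k.

(* Upper-left m x m block of the Hermite matrix H(n): entries p_{i+j-2}
   (1-based), i.e. p_{i+j} for 0-based indices i, j < m. *)
Definition hermite_mx (R : comRingType) (n : nat) (z : 'I_n -> R) (m : nat)
  : 'M[R]_m := \matrix_(i < m, j < m) psum z (i + j).

(* e^{(i,j)}_m : elementary symmetric polynomial of degree m in the variables
   z_l, l <> i, j  (equals 1 for m = 0 and 0 for m > n - 2). *)
Definition esym_ij (R : comRingType) (n : nat) (z : 'I_n -> R)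
  (i j : 'I_n) (m : nat) : R :=
  \sum_(S : {set 'I_n} | (#|S| == m) && (S \subset ~: [set i; j]))
     \prod_(l in S) z l.

(* Upper-left m x m block of E(n); 0-based r, s < m correspond to the
   1-based indices r+1, s+1, so (r+1-1)! = r!. *)
Definition E_mx (R : comRingType) (n : nat) (z : 'I_n -> R) (m : nat)
  : 'M[R]_m :=
  \matrix_(r < m, s < m)
    ((r`!)%:R * (s`!)%:R *
     \sum_(i < n) \sum_(j < n | (i < j)%N)
        esym_ij z i j r * esym_ij z i j s * (z i - z j) ^+ 2).

From HB Require Import structures.
From mathcomp Require Import all_boot all_order all_algebra.
From mathcomp Require Import ring.
Import GRing.Theory.
Set Implicit Arguments. Unset Strict Implicit. Unset Printing Implicit Defensive.
Local Open Scope ring_scope.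

(* Let e_m be the elementary symmetric polynomials in all of z_1, ..., z_n.
   Removing the factors (r-1)! (s-1)! from E(n) leaves the Gram matrix
   sum_{i<j} w_ij w_ij^T of the vectors w_ij = (e^{(i,j)}_r (z_i - z_j))_r.
   Since e^{(i,j)}_r (z_i - z_j) = sum_c (-1)^c e_{r-c} (z_i^{c+1} - z_j^{c+1}),
   we have w_ij = L y_ij with L lower triangular with diagonal entries +-1 and
   y_ij = (z_i^{c+1} - z_j^{c+1})_c.  By Lagrange's identity
   sum_{i<j} y_ij y_ij^T = n P - p p^T with P = (p_{c+d+2})_{c,d} and
   p = (p_{c+1})_c, and the Schur complement formula gives
   det (n P - p p^T) = n^{k-1} det [[n, p^T], [p, P]] = n^{k-1} Delta_{k+1}(H(n)). *)

Section ElementarySymmetric.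

Variables (R : comRingType) (n : nat) (z : 'I_n -> R).

Definition esymC (A : {set 'I_n}) (m : nat) : R :=
  \sum_(S : {set 'I_n} | (#|S| == m) && (S \subset ~: A)) \prod_(l in S) z l.

Lemma esymC0 (A : {set 'I_n}) : esymC A 0 = 1.
Proof.
rewrite /esymC (bigD1 set0) /=; last by rewrite cards0 sub0set.
rewrite big_set0 big1 ?addr0 // => S /andP[/andP[/eqP/cards0_eq -> _]].
by rewrite eqxx.
Qed.

Lemma esymC_split (A : {set 'I_n}) (l : 'I_n) (m : nat) : l \notin A ->
  esymC A m.+1 = esymC (l |: A) m.+1 + z l * esymC (l |: A) m.
Proof.
move=> lA; have subC1 (T : {set 'I_n}) : (T \subset ~: [set l]) = (l \notin T).
  by rewrite subsetC sub1set in_setC.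
rewrite /esymC (bigID (fun S : {set 'I_n} => l \in S)) /= addrC; congr (_ + _).
  apply: eq_bigl => S.
  by rewrite setCU subsetI subC1 -!andbA [(l \notin S) && _]andbC.
rewrite big_distrr /= (reindex_onto (fun S => l |: S) (fun S => S :\ l)) /=; last first.
  by move=> S /andP[_ lS]; rewrite setD1K.
apply: eq_big => [T|T].
  rewrite setU11 andbT setCU subsetI subC1.
  case lT: (l \in T) => /=.
    rewrite !andbF; apply/negbTE; rewrite negb_and; apply/orP; right.
    by apply/eqP => E; move: lT; rewrite -E setD11.
  rewrite setU1K ?lT // eqxx andbT cardsU1 lT add1n eqSS.
  by rewrite subUset sub1set in_setC lA.
rewrite setU11 andbT => /andP[_ /eqP E].
have lT : l \notin T by rewrite -E setD11.
by rewrite big_setU1.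
Qed.

Lemma esymC1 (i : 'I_n) (m : nat) :
  esymC [set i] m = \sum_(b < m.+1) esymC set0 (m - b) * (- z i) ^+ b.
Proof.
elim: m => [|m IHm]; first by rewrite esymC0 big_ord1 subn0 esymC0 expr0 mulr1.
have := @esymC_split set0 i m; rewrite in_set0 setU0 => /(_ isT) split_i.
rewrite [LHS](_ : _ = esymC set0 m.+1 - z i * esymC [set i] m); last first.
  by rewrite split_i addrK.
rewrite big_ord_recl subn0 expr0 mulr1 IHm mulr_sumr -sumrN.
congr (_ + _); apply: eq_bigr => b _.
rewrite lift0 subSS exprS.
move: (esymC set0 (m - b)) ((- z i) ^+ b) (z i) => e s a; ring.
Qed.

Lemma esym_ij_mul_sub (i j : 'I_n) (r : nat) : i != j ->
  esym_ij z i j r * (z i - z j) =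
  \sum_(c < r.+1) esymC set0 (r - c) * (-1) ^+ c * (z i ^+ c.+1 - z j ^+ c.+1).
Proof.
move=> ij.
have split_i := @esymC_split [set j] i r; have split_j := @esymC_split [set i] j r.
rewrite in_set1 ij in split_i; rewrite in_set1 eq_sym ij setUC in split_j.
have -> : esym_ij z i j r * (z i - z j) = esymC [set j] r.+1 - esymC [set i] r.+1.
  rewrite split_i // split_j //; change (esym_ij z i j r) with (esymC [set i; j] r).
  move: (esymC [set i; j] r.+1) (esymC [set i; j] r) => x y; ring.
rewrite !esymC1 -sumrB big_ord_recl !expr0 subrr add0r.
apply: eq_bigr => c _; rewrite !lift0 subSS (exprNn (z i)) (exprNn (z j)) [(-1) ^+ c.+1]exprS.
move: (esymC set0 (r - c)) ((-1) ^+ c) (z i ^+ c.+1) (z j ^+ c.+1) => e s a b.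
ring.
Qed.

End ElementarySymmetric.

Section PairSums.

Variables (R : comRingType) (n : nat).

Lemma sum_ltn_addC (F : 'I_n -> 'I_n -> R) :
  \sum_(i < n) \sum_(j < n | (i < j)%N) (F i j + F j i) =
  \sum_(i < n) \sum_(j < n | j != i) F i j.
Proof.
have swap : \sum_(i < n) \sum_(j < n | (j < i)%N) F i j =
            \sum_(i < n) \sum_(j < n | (i < j)%N) F j i.
  under eq_bigr do rewrite big_mkcond.
  by rewrite exchange_big /=; apply: eq_bigr => i _; rewrite [RHS]big_mkcond.
under eq_bigr do rewrite big_split.
rewrite big_split /= -swap -big_split.
apply: eq_bigr => i _; rewrite [RHS](bigID (fun j : 'I_n => (i < j)%N)) /=.
by congr (_ + _); apply: eq_bigl => j; rewrite -(inj_eq val_inj) /= neq_ltn;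
  case: ltngtP.
Qed.

Lemma sum_offdiag (F : 'I_n -> 'I_n -> R) :
  \sum_(i < n) \sum_(j < n | j != i) F i j =
  \sum_(i < n) \sum_(j < n) F i j - \sum_(i < n) F i i.
Proof.
rewrite -sumrB; apply: eq_bigr => i _.
by rewrite [\sum_(j < n) F i j](bigD1 i) //= addrC addrK.
Qed.

Lemma lagrange_identity (a b : 'I_n -> R) :
  \sum_(i < n) \sum_(j < n | (i < j)%N) (a i - a j) * (b i - b j) =
  n%:R * \sum_(i < n) a i * b i - (\sum_(i < n) a i) * (\sum_(i < n) b i).
Proof.
transitivity (\sum_(i < n) \sum_(j < n | (i < j)%N)
   ((a i * b i + a j * b j) - (a i * b j + a j * b i))).
  by apply: eq_bigr => i _; apply: eq_bigr => j _; ring.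
under eq_bigr do rewrite sumrB.
rewrite sumrB (sum_ltn_addC (fun i _ => a i * b i)) (sum_ltn_addC (fun i j => a i * b j)).
rewrite !sum_offdiag.
under eq_bigr do rewrite sumr_const card_ord.
rewrite sumrMnl -mulr_natl big_distrl /=.
under [in X in _ = _ - X]eq_bigr do rewrite big_distrr.
move: (\sum_(i < n) a i * b i) (\sum_(i < n) \sum_(j < n) a i * b j) => x y.
ring.
Qed.

End PairSums.

Lemma det_block_scalar_mul (R : comRingType) k (a : R) (u v : 'cV[R]_k) (B : 'M[R]_k) :
  a ^+ k * \det (block_mx (a%:M : 'M_1) v^T u B) = a * \det (a *: B - u *m v^T).
Proof.
have := det_mulmx (block_mx (1%:M : 'M_1) 0 (- u) (a%:M : 'M_k))
                  (block_mx (a%:M : 'M_1) v^T u B).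
rewrite det_lblock det1 det_scalar mul1r mulmx_block.
rewrite !mul1mx !mul0mx !addr0 !mulNmx mul_mx_scalar !mul_scalar_mx addNr.
by rewrite det_ublock det_scalar1 addrC => <-.
Qed.

(* a need not be regular in R, so a is cancelled as the indeterminate X of
   R[X], which is regular, before evaluating at a. *)
Lemma det_scale_sub_rank1 (R : comRingType) k (a : R) (u v : 'cV[R]_k) (B : 'M[R]_k) :
  (0 < k)%N ->
  \det (a *: B - u *m v^T) = a ^+ k.-1 * \det (block_mx (a%:M : 'M_1) v^T u B).
Proof.
case: k u v B => // k u v B _ /=.
pose f m1 m2 (M : 'M[R]_(m1, m2)) := map_mx (@polyC R) M.
have := det_block_scalar_mul 'X (f _ _ u) (f _ _ v) (f _ _ B).
rewrite exprS -mulrA => /(monic_lreg (monicX R)) /(congr1 (horner_eval a)).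
rewrite rmorphM rmorphXn /= horner_evalE hornerX -!det_map_mx.
have fK m1 m2 (M : 'M[R]_(m1, m2)) : map_mx (horner_eval a) (f _ _ M) = M.
  by apply/matrixP => i j; rewrite !mxE horner_evalE hornerC.
rewrite map_block_mx map_scalar_mx /= horner_evalE hornerX -map_trmx !fK => ->.
congr (\det _); apply/matrixP => i j.
by rewrite !mxE !big_ord1 !mxE horner_evalE !hornerE.
Qed.

Section HermiteEsymIdentity.

Variables (R : comRingType) (n : nat) (z : 'I_n -> R) (k : nat).

Definition esym_gram_mx : 'M[R]_k :=
  \matrix_(r < k, s < k) \sum_(i < n) \sum_(j < n | (i < j)%N)
        esym_ij z i j r * esym_ij z i j s * (z i - z j) ^+ 2.

Definition esym_trig_mx : 'M[R]_k :=
  \matrix_(r < k, c < k) (if (c <= r)%N then esymC z set0 (r - c) * (-1) ^+ c else 0).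

Definition pow_diff_col (i j : 'I_n) : 'cV[R]_k :=
  \col_(c < k) (z i ^+ c.+1 - z j ^+ c.+1).

Definition pow_diff_gram_mx : 'M[R]_k :=
  \sum_(i < n) \sum_(j < n | (i < j)%N) pow_diff_col i j *m (pow_diff_col i j)^T.

Definition psum_col : 'cV[R]_k := \col_(c < k) psum z c.+1.

Definition psum_hankel_mx : 'M[R]_k := \matrix_(c < k, d < k) psum z (c.+1 + d.+1).

Lemma det_E_mx :
  \det (E_mx z k) = (\prod_(i < k) (i`!)%:R) ^+ 2 * \det esym_gram_mx.
Proof.
pose d : 'rV[R]_k := \row_(r < k) (r`!)%:R.
have -> : E_mx z k = diag_mx d *m esym_gram_mx *m diag_mx d.
  by apply/matrixP => r s; rewrite mul_mx_diag mul_diag_mx !mxE mulrAC.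
rewrite !det_mulmx det_diag.
under eq_bigr do rewrite mxE.
by rewrite expr2 mulrAC.
Qed.

Lemma esym_gram_mxE :
  esym_gram_mx = esym_trig_mx *m pow_diff_gram_mx *m esym_trig_mx^T.
Proof.
pose w (i j : 'I_n) : 'cV[R]_k := \col_(r < k) (esym_ij z i j r * (z i - z j)).
have -> : esym_gram_mx = \sum_(i < n) \sum_(j < n | (i < j)%N) w i j *m (w i j)^T.
  apply/matrixP => r s; rewrite !mxE summxE; apply: eq_bigr => i _.
  rewrite summxE; apply: eq_bigr => j _; rewrite !mxE big_ord1 !mxE.
  move: (esym_ij z i j r) (esym_ij z i j s) (z i - z j) => x y t; ring.
have wE i j : i != j -> w i j = esym_trig_mx *m pow_diff_col i j.
  move=> ij; apply/matrixP => r x; rewrite !mxE esym_ij_mul_sub //.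
  rewrite (big_ord_widen k (fun c => esymC z set0 (r - c) * (-1) ^+ c *
                                      (z i ^+ c.+1 - z j ^+ c.+1))) //.
  rewrite big_mkcond; apply: eq_bigr => c _; rewrite !mxE ltnS.
  by case: ifP => _; rewrite ?mul0r.
rewrite mulmx_sumr mulmx_suml; apply: eq_bigr => i _.
rewrite mulmx_sumr mulmx_suml; apply: eq_bigr => j ij.
rewrite wE; last by rewrite -(inj_eq val_inj) /= neq_ltn ij.
by rewrite trmx_mul !mulmxA.
Qed.

Lemma det_esym_trig_mx : \det esym_trig_mx = \prod_(c < k) (-1) ^+ c.
Proof.
rewrite det_trig; last by apply/is_trig_mxP => i j ij; rewrite mxE leqNgt ij.
by apply: eq_bigr => c _; rewrite mxE leqnn subnn esymC0 mul1r.
Qed.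

Lemma det_esym_gram_mx : \det esym_gram_mx = \det pow_diff_gram_mx.
Proof.
rewrite esym_gram_mxE !det_mulmx det_tr det_esym_trig_mx mulrAC -expr2 -prodrXl.
by rewrite big1 ?mul1r // => c _; rewrite -exprM mulnC exprM sqrrN !expr1n.
Qed.

Lemma pow_diff_gram_mxE :
  pow_diff_gram_mx = n%:R *: psum_hankel_mx - psum_col *m psum_col^T.
Proof.
apply/matrixP => c d; rewrite /pow_diff_gram_mx !mxE summxE.
under eq_bigr do rewrite summxE.
under eq_bigr do under eq_bigr do rewrite !mxE big_ord1 !mxE.
rewrite lagrange_identity big_ord1 !mxE /psum.
by under [in RHS]eq_bigr do rewrite exprD.
Qed.

Lemma hermite_mx_block :
  hermite_mx z k.+1 =
  block_mx ((n%:R : R)%:M : 'M_1) psum_col^T psum_col psum_hankel_mx.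
Proof.
rewrite -(@submxK _ 1 k 1 k (hermite_mx z k.+1)).
f_equal; apply/matrixP => i j; rewrite !mxE /= ?ord1.
- rewrite mulr1n /psum.
  by under eq_bigr do rewrite expr0; rewrite sumr_const card_ord.
- by rewrite add0n add1n.
- by rewrite addn0 add1n.
- by rewrite !add1n.
Qed.

End HermiteEsymIdentity.

Unset Implicit Arguments.

(* The identity holds for every k >= 1; outside the stated range both sides vanish. *)
Theorem mainTheorem1 (R : comRingType) (n k : nat) (z : 'I_n -> R) :
  (2 <= n)%N -> (1 <= k)%N -> (k <= n - 1)%N ->
  (\prod_(i < k) (i`!)%:R) ^+ 2 * (n%:R) ^+ (k - 1) * \det (hermite_mx z k.+1)
  = \det (E_mx z k).
Proof.
move=> _ k_gt0 _.
rewrite det_E_mx det_esym_gram_mx pow_diff_gram_mxE det_scale_sub_rank1 //.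
by rewrite hermite_mx_block subn1 mulrA.
Qed.
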